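(* If $MA_{\aleph_1}$ holds, then the space $\sigma(2^{\omega_1})=\{x\in 2^{\omega_1}:|x^{-1}(1)|<\omega\}$, as a subspace of the Cantor cube $2^{\omega_1}$, is discretely discretely generated.
   Context: A space $X$ is discretely discretely generated (DDG) if for every set $A\subseteq X$ and every discrete set $D\subseteq\overline{A}$ there is a discrete set $E\subseteq A$ with $D\subseteq\overline{E}$. $MA_{\aleph_1}$ is Martin's Axiom for ccc posets and $\aleph_1$ dense sets. *)

From HB Require Import structures.
From mathcomp Require Import all_boot all_order.
From mathcomp Require Import all_classical all_reals all_analysis.

Set Implicit Arguments.
Unset Strict Implicit.
Unset Printing Implicit Defensive.

Local Open Scope classical_set_scope.

Definition is_omega1 (W : Type) (lt : W -> W -> Prop) : Prop :=
  [/\ well_founded lt,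
      (forall x y z, lt x y -> lt y z -> lt x z),
      (forall x y, x = y \/ lt x y \/ lt y x),
      ~ countable [set: W]
    & (forall w : W, countable [set v | lt v w])].

Section Forcing.
Variables (P : Type) (le : P -> P -> Prop).

Definition is_partial_order : Prop :=
  [/\ (forall p, le p p),
      (forall p q r, le p q -> le q r -> le p r)
    & (forall p q, le p q -> le q p -> p = q)].

Definition compatible (p q : P) : Prop := exists r, le r p /\ le r q.

Definition antichain (A : set P) : Prop :=
  forall p q, A p -> A q -> p <> q -> ~ compatible p q.

Definition ccc : Prop := forall A : set P, antichain A -> countable A.

Definition dense_set (D : set P) : Prop := forall p, exists2 q, D q & le q p.

Definition is_filter (G : set P) : Prop :=
  [/\ G !=set0,
      (forall p q, G p -> le p q -> G q)
    & (forall p q, G p -> G q -> exists r, [/\ G r, le r p & le r q])].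
End Forcing.

Definition MA_aleph1 : Prop :=
  forall (W : Type) (lt : W -> W -> Prop), is_omega1 lt ->
  forall (P : Type) (le : P -> P -> Prop),
    is_partial_order le -> inhabited P -> ccc le ->
    forall D : W -> set P, (forall w, dense_set le (D w)) ->
    exists G : set P, is_filter le G /\ forall w, G `&` D w !=set0.

Definition cantor_cube (I : Type) : topologicalType :=
  prod_topology (fun _ : I => bool).

Definition sigma_product (I : Type) : set (cantor_cube I) :=
  [set x | finite_set [set i | x i = true]].

Section DDG.
Variable T : topologicalType.

(* D is discrete as a subspace of X (D is assumed to be a subset of X) *)
Definition discrete_in (X D : set T) : Prop :=
  forall x, D x -> exists U : set T, open U /\ U `&` X `&` D = [set x].

Definition closure_in (X A : set T) : set T := closure A `&` X.

Definition DDG_subspace (X : set T) : Prop :=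
  forall A : set T, A `<=` X ->
  forall D : set T, D `<=` closure_in X A -> discrete_in X D ->
  exists E : set T, [/\ E `<=` A, discrete_in X E & D `<=` closure_in X E].
End DDG.
Arguments sigma_product I : clear implicits.

From mathcomp Require Import finmap.
From mathcomp Require Import all_boot all_classical all_reals all_analysis.

Set Implicit Arguments.
Unset Strict Implicit.
Unset Printing Implicit Defensive.

Local Open Scope classical_set_scope.

(* Each non-isolated d in D is the limit of
   approximants t_k(d) in A that contain d, agree with d on a finite window isolating d in D,
   and have pairwise disjoint tails beyond d. A condition is a finite set of approximants that
   is coherent: t_k(d) strictly below a chosen t_l(d') forces t_k(d) below the centre d'.
   Coherence keeps the set E of chosen points discrete, since a chosen point close to and above
   t_k(d) would have a centre agreeing with d on its window, hence equal to d.
   Conditions of the same finite type whose supports are aligned have a coherent union, and a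
   Delta-system argument finds two aligned ones in any uncountable family: the poset is ccc.
   MA_{aleph_1}, applied to the aleph_1 dense sets "some t_k(d) with k >= n is chosen", yields
   a generic E with D in its closure. *)

Lemma countable_subset T (S B : set T) : S `<=` B -> countable B -> countable S.
Proof. by move=> SB; apply: sub_countable; apply: subset_card_le. Qed.

Lemma inj_countable T U (f : T -> U) (S : set T) (B : set U) :
  {in S &, injective f} -> f @` S `<=` B -> countable B -> countable S.
Proof.
move=> finj fSB /(countable_subset fSB) /countable_injP [g ginj].
apply/countable_injP; exists (g \o f) => x y Sx Sy /ginj gfxy.
by apply: finj => //; apply: gfxy; rewrite inE; [exists x|exists y]; rewrite // -inE.
Qed.

Lemma countableU T (S1 S2 : set T) :
  countable S1 -> countable S2 -> countable (S1 `|` S2).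
Proof.
move=> c1 c2.
apply: (@countable_subset _ _ (\bigcup_(b in [set: bool]) (if b then S1 else S2))).
  by move=> x [S1x|S2x]; [exists true|exists false].
by apply: bigcup_countable => // -[].
Qed.

Lemma uncountable_fiber T (K : countType) (f : T -> K) (S : set T) :
  ~ countable S -> exists k, ~ countable (S `&` f @^-1` [set k]).
Proof.
move=> Sunc; apply: contrapT => fibers; apply: Sunc.
apply: (@countable_subset _ _ (\bigcup_(k in [set: K]) (S `&` f @^-1` [set k]))).
  by move=> x Sx; exists (f x).
by apply: bigcup_countable => // k _; apply: contrapT => kunc; apply: fibers; exists k.
Qed.

Lemma countable_range_nat T (x0 : T) (S : set T) : countable S ->
  exists e : nat -> T, S `<=` range e.
Proof.
move=> /countable_injP [f finj].
pose e n := if pselect (exists2 x, S x & f x = n) is left h then projT1 (cid2 h) else x0.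
exists e => x Sx; exists (f x) => //; rewrite /e.
case: pselect => [h|]; last by case; exists x.
by case: (cid2 h) => y Sy fy /=; apply: finj; rewrite ?inE.
Qed.

Section Omega1.
Variables (W : Type) (lt : W -> W -> Prop).
Hypothesis W_omega1 : is_omega1 lt.

Lemma omega1_inhabited : inhabited W.
Proof.
case: W_omega1 => _ _ _ Wunc _; apply: contrapT => Wempty; apply: Wunc.
suff -> : [set: W] = set0 by [].
by apply/seteqP; split => w // _; apply: Wempty.
Qed.

Lemma countable_initial_segment w : countable [set v | lt v w \/ v = w].
Proof. by case: W_omega1 => _ _ _ _ segc; apply: countableU (segc w) (countable1 w). Qed.

Lemma finite_set_bounded (w0 : W) (B : set W) : finite_set B ->
  exists w, B `<=` [set v | lt v w \/ v = w].
Proof.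
case: W_omega1 => _ lt_trans lt_total _ _.
move=> /(@finite_seqP {classic W}) [s ->] {B}.
elim: s => [|a s [w sw]]; first by exists w0.
have [->|[aw|wa]] := lt_total a w.
- by exists w => v /=; rewrite in_cons => /orP [/eqP ->|/sw]; [right|].
- by exists w => v /=; rewrite in_cons => /orP [/eqP ->|/sw]; [left|].
exists a => v /=; rewrite in_cons => /orP [/eqP ->|/sw [vw|->]]; [right|left|left] => //.
exact: lt_trans wa.
Qed.

Section Lexicographic.
Variable K : countType.

Definition lexi_lt (a b : W * K) :=
  lt a.1 b.1 \/ (a.1 = b.1 /\ (pickle a.2 < pickle b.2)%N).

Lemma lexi_lt_wf : well_founded lexi_lt.
Proof.
case: W_omega1 => lt_wf _ _ _ _.
suff acc w : forall n (m : K), (pickle m < n)%N -> Acc lexi_lt (w, m).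
  by move=> [w m]; exact: (acc w _ m (ltnSn _)).
elim/(well_founded_ind lt_wf): w => w IHw; elim=> [|n IHn] m mn; first by [].
constructor => -[v m'] [vw|[/= -> m'm]]; first exact: (IHw v vw (pickle m').+1).
exact: IHn (leq_trans m'm mn).
Qed.

Lemma is_omega1_lexi (k0 : K) : is_omega1 lexi_lt.
Proof.
case: W_omega1 => _ lt_trans lt_total Wunc segc; split.
- exact: lexi_lt_wf.
- move=> [a1 a2] [b1 b2] [c1 c2]; rewrite /lexi_lt /=.
  case=> [ab|[-> ab]] [bc|[<- bc]]; [left; exact: lt_trans ab bc|left|left|right] => //.
  by split; [|exact: ltn_trans ab bc].
- move=> [a1 a2] [b1 b2]; rewrite /lexi_lt /=.
  have [<-|[ab|ba]] := lt_total a1 b1; [|by right; left; left|by right; right; left].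
  have [ab|ba|/(pcan_inj pickleK_inv) ->] := ltngtP (pickle a2) (pickle b2).
  + by right; left; right.
  + by right; right; right.
  + by left.
- move=> Wc; apply: Wunc.
  apply: (@inj_countable _ _ (fun w => (w, k0)) setT setT) => //.
  by move=> x y _ _ [].
- move=> [w m].
  apply: (@countable_subset _ _ ([set v | lt v w \/ v = w] `*` setT)).
    by move=> [v m'] [vw|[/= -> _]]; split => //=; [left|right].
  by apply: countableX => //; exact: countable_initial_segment.
Qed.

Lemma MA_aleph1_lexi (k0 : K) : MA_aleph1 ->
  forall (P : Type) (le : P -> P -> Prop), is_partial_order le -> inhabited P -> ccc le ->
  forall D : W * K -> set P, (forall v, dense_set le (D v)) ->
  exists G : set P, is_filter le G /\ forall v, G `&` D v !=set0.
Proof. by move=> MA; apply: MA; exact: is_omega1_lexi. Qed.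
End Lexicographic.
End Omega1.

Section Aligned.
Variables (T : eqType) (a0 : T) (n : nat).

Definition aligned (s s' : seq T) :=
  forall a, a \in s -> a \in s' -> index a s = index a s'.

Lemma aligned_sym s s' : aligned s s' -> aligned s' s.
Proof. by move=> al a in_s in_s'; rewrite al. Qed.

Definition shaped (S : set (seq T)) := forall s, S s -> uniq s /\ size s = n.

Definition fixed_off (S : set (seq T)) (fr : seq nat) :=
  forall s s', S s -> S s' -> forall i, (i < n)%N -> i \notin fr -> nth a0 s i = nth a0 s' i.

(* Throw away the countably many sequences carrying an entry of s0 at a free position; any
   remaining s' shares with s0 only entries at fixed positions, where they coincide. *)
Lemma aligned_pair_thin (S : set (seq T)) (fr : seq nat) :
  shaped S -> ~ countable S -> fixed_off S fr ->
  (forall i a, (i < n)%N -> i \in fr -> countable (S `&` [set s | nth a0 s i = a])) ->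
  exists s s', [/\ S s, S s', s <> s' & aligned s s'].
Proof.
move=> Sshape Sunc Sfix thin.
have [s0 Ss0] : S !=set0.
  by apply/set0P/negP => /eqP S0; apply: Sunc; rewrite S0.
pose hit (ik : nat * nat) := S `&`
  [set s | [/\ (ik.1 < n)%N, ik.1 \in fr & nth a0 s ik.1 = nth a0 s0 ik.2]].
have hit_countable : countable (\bigcup_(ik in [set: nat * nat]) hit ik).
  apply: bigcup_countable => // -[i k] _ /=.
  have [/andP [iln ifr]|free] := boolP ((i < n)%N && (i \in fr)).
    by apply: countable_subset (thin i (nth a0 s0 k) iln ifr) => s [Ss [_ _ sik]].
  by rewrite (_ : hit _ = set0) // -subset0 => s [_ [iln ifr _]]; rewrite iln ifr in free.
have [s' [Ss' /= s'nhit s's0]] :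
    exists s', [/\ S s', ~ (\bigcup_(ik in setT) hit ik) s' & s' <> s0].
  apply: contrapT => noS'; apply: Sunc.
  apply: (countable_subset _ (countableU hit_countable (countable1 s0))) => s Ss.
  by apply: contrapT => /not_orP [sh ss0]; apply: noS'; exists s.
exists s0, s'; split => // [/esym //|a in_s0 in_s'].
have [u0 sz0] := Sshape s0 Ss0; have [u' sz'] := Sshape s' Ss'.
have jn : (index a s' < n)%N by rewrite -sz' index_mem.
have s'j : nth a0 s' (index a s') = a by rewrite nth_index.
have [jfr|jfix] := boolP (index a s' \in fr).
  by case: s'nhit; exists (index a s', index a s0) => //; split; rewrite //= s'j nth_index.
have := Sfix s0 s' Ss0 Ss' _ jn jfix; rewrite s'j => s0j.
by rewrite -{1}s0j index_uniq // sz0.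
Qed.

(* An uncountable fibre at a free position lets that position be fixed. *)
Lemma aligned_pair_fixed_off m (S : set (seq T)) (fr : seq nat) :
  shaped S -> ~ countable S -> uniq fr -> (size fr <= m)%N -> fixed_off S fr ->
  exists s s', [/\ S s, S s', s <> s' & aligned s s'].
Proof.
elim: m S fr => [|m IH] S fr Sshape Sunc ufr szfr Sfix.
  apply: (aligned_pair_thin Sshape Sunc Sfix) => i a _.
  by move: szfr; rewrite leqn0 => /nilP ->.
have [[i [a [iln ifr fiber_unc]]]|thin] := pselect (exists i a, [/\ (i < n)%N, i \in fr &
    ~ countable (S `&` [set s | nth a0 s i = a])]); last first.
  apply: (aligned_pair_thin Sshape Sunc Sfix) => i a iln ifr.
  by apply: contrapT => fiber_unc; apply: thin; exists i, a.
have fiber_fix : fixed_off (S `&` [set s | nth a0 s i = a]) (rem i fr).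
  move=> s s' [Ss si] [Ss' s'i] k kn; rewrite mem_rem_uniq // inE negb_and negbK.
  by case/orP => [/eqP ->|kfr]; [rewrite si s'i|exact: Sfix].
have szrem : (size (rem i fr) <= m)%N by rewrite size_rem //; move: szfr; case: (size fr).
have [s [s' [[Ss _] [Ss' _] ss' al]]] :=
  IH _ _ (fun s (Ss : (S `&` _) s) => Sshape s Ss.1) fiber_unc (rem_uniq _ ufr) szrem fiber_fix.
by exists s, s'.
Qed.

Lemma uncountable_aligned_pair (S : set (seq T)) : shaped S -> ~ countable S ->
  exists s s', [/\ S s, S s', s <> s' & aligned s s'].
Proof.
move=> Sshape Sunc; apply: (@aligned_pair_fixed_off n S (iota 0 n)) => //.
- exact: iota_uniq.
- by rewrite size_iota.
- by move=> s s' _ _ i iln; rewrite mem_iota iln.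
Qed.
End Aligned.

Section CantorCube.
Variable W : Type.
Local Notation C := (cantor_cube W).
Local Notation V := {classic W}.

Definition agree (F : seq V) (x y : C) := forall i, i \in F -> y i = x i.

Lemma agree_cat F1 F2 (x y : C) :
  agree (F1 ++ F2) x y <-> agree F1 x y /\ agree F2 x y.
Proof.
split => [xy|[xy1 xy2] i]; last by rewrite mem_cat => /orP [/xy1|/xy2].
by split => i iF; apply: xy; rewrite mem_cat iF ?orbT.
Qed.

Lemma agree_preimages (x : C) (s : seq (set C)) :
  (forall M, M \in s -> exists i (B : set bool), M = (fun f : C => f i) @^-1` B) ->
  exists F, forall y : C, agree F x y -> forall M, M \in s -> M x -> M y.
Proof.
elim: s => [|M s IH] Ms; first by exists nil => y _ M; rewrite in_nil.
have [F HF] : exists F, forall y : C, agree F x y -> forall M, M \in s -> M x -> M y.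
  by apply: IH => M' M's; apply: Ms; rewrite in_cons M's orbT.
have [i [B ->]] := Ms M (mem_head _ _).
exists ((i : V) :: F) => y xy M'; rewrite in_cons => /orP [/eqP ->|M's].
  by rewrite /preimage /= (xy i (mem_head _ _)).
by apply: HF => // j jF; apply: xy; rewrite in_cons jF orbT.
Qed.

Lemma nbhs_agree (x : C) (U : set C) : nbhs x U ->
  exists F : seq V, [set y | agree F x y] `<=` U.
Proof.
move=> [P [[Q Qfin <-] [N QN Nx]] PU].
have [L Lsub NL] := Qfin _ QN.
have [F HF] : exists F, forall y : C, agree F x y ->
    forall M, M \in enum_fset L -> M x -> M y.
  by apply: agree_preimages => M /Lsub; rewrite inE => -[i _ [B _ <-]]; exists i, B.
exists F => y xy; apply: PU; exists N => //.
by move: Nx; rewrite /= -NL => Nx M LM; exact: HF xy M LM (Nx M LM).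
Qed.

Lemma open_agree (x : C) (F : seq V) : open [set y | agree F x y].
Proof.
elim: F => [|i F IH].
  rewrite (_ : [set y | _] = setT); first exact: openT.
  by apply/seteqP; split => y //= _ j; rewrite in_nil.
have -> : [set y | agree (i :: F) x y] = [set y : C | y i = x i] `&` [set y | agree F x y].
  apply/seteqP; split => y /=.
    by move=> xy; split => [|j jF]; apply: xy; rewrite in_cons ?eqxx ?jF ?orbT.
  by move=> [yi xy] j; rewrite in_cons => /orP [/eqP ->|/xy].
apply: openI => //.
set M := [set y : C | y i = x i].
exists [set M]; last by rewrite bigcup_set1.
move=> _ ->; exists (fset1 M).
  move=> N; rewrite in_fset1 => /eqP ->; rewrite inE.
  by exists i => //; exists [set x i] => //; exact: discrete_open.
apply/seteqP; split => y /=.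
  by move=> /(_ M); apply; rewrite /= in_fset1.
by move=> My N; rewrite /= in_fset1 => /eqP ->.
Qed.

Lemma agree_nbhs (x : C) (F : seq V) : nbhs x [set y | agree F x y].
Proof. by apply: open_nbhs_nbhs; split; [exact: open_agree|]. Qed.

Lemma sigma_product_seq (d : C) : sigma_product W d ->
  exists L : seq V, forall i : V, d i = (i \in L).
Proof.
move=> /(@finite_seqP V) [L /seteqP [dL Ld]]; exists L => i.
by apply/idP/idP => [/dL|/Ld].
Qed.

Definition supp (d : C) : seq V :=
  if pselect (sigma_product W d) is left h then projT1 (cid (sigma_product_seq h)) else [::].

Lemma suppP (d : C) : sigma_product W d -> forall i : V, d i = (i \in supp d).
Proof. by move=> Xd; rewrite /supp; case: pselect => // Xd'; case: cid. Qed.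

Definition subsupp (a b : C) := forall i, a i -> b i.

Lemma subsupp_anti (a b : C) : subsupp a b -> subsupp b a -> a = b.
Proof.
by move=> ab ba; apply: functional_extensionality_dep => i; apply/idP/idP => [/ab|/ba].
Qed.

Definition ssubsupp (a b : C) := subsupp a b /\ a <> b.

Lemma ssubsupp_new (a b : C) : ssubsupp a b -> exists i : V, b i /\ ~~ a i.
Proof.
move=> [ab nab]; apply: contrapT => nonew; apply/nab/subsupp_anti => // i bi.
by apply: contrapT => /negP nai; apply: nonew; exists i.
Qed.

Lemma eq_of_map_supp (L : seq V) (f g : C) : map f L = map g L ->
  (forall i, f i -> i \in L) -> (forall i, g i -> i \in L) -> f = g.
Proof.
move=> fg fL gL; apply: functional_extensionality_dep => i0; pose i : V := i0.
case iL: (i \in L).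
  have := congr1 (nth false ^~ (index i L)) fg.
  by rewrite /= !(nth_map i) ?index_mem // nth_index.
case fi: (f i0); first by have := fL i0 fi; rewrite -/i iL.
by case gi: (g i0) => //; have := gL i0 gi; rewrite -/i iL.
Qed.

Lemma aligned_map_eq (L L' : seq V) (g g' : C) (a : V) : aligned L L' ->
  a \in L -> a \in L' -> map g L = map g' L' -> g a = g' a.
Proof.
move=> al aL aL' /(congr1 (nth false ^~ (index a L))) /=.
rewrite (nth_map a) ?index_mem // nth_index // (al a aL aL').
by rewrite (nth_map a) ?index_mem // nth_index.
Qed.

(* A coordinate where g' exceeds f sits at a position of L' whose counterpart in L is a
   coordinate where g exceeds f. *)
Lemma aligned_map_ssubsupp (L L' : seq V) (f g g' : C) :
  aligned L L' -> size L = size L' -> uniq L ->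
  (forall i, f i -> i \in L) -> (forall i, g' i -> i \in L') ->
  map g L = map g' L' -> ssubsupp f g' -> ssubsupp f g.
Proof.
move=> al sz uL fL g'L gg' [fg' nfg'].
have fL' i : f i -> i \in L' by move=> /fg'; exact: g'L.
have fg i : f i -> g i = g' i.
  by move=> fi; apply: aligned_map_eq al _ _ gg'; [exact: fL|exact: fL'].
split=> [i fi|efg]; first by rewrite fg // fg'.
have [b [g'b nfb]] := ssubsupp_new (conj fg' nfg').
pose j := index b L'; pose u := nth b L j.
have jL : (j < size L)%N by rewrite sz index_mem g'L.
have gu : g u = g' b.
  have /= := congr1 (nth false ^~ j) gg'.
  by rewrite (nth_map b) // (nth_map b) ?nth_index ?g'L // -sz.
have fu : f u by rewrite efg gu.
have uj : index u L' = j by rewrite -(al u (fL u fu) (fL' u fu)) index_uniq.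
have ub : u = b by rewrite -[u](nth_index b (fL' u fu)) uj nth_index ?g'L.
by move: nfb; rewrite -ub fu.
Qed.

End CantorCube.

Section SigmaEnumeration.
Variables (W : Type) (lt : W -> W -> Prop) (w0 : W).
Hypothesis W_omega1 : is_omega1 lt.
Local Notation C := (cantor_cube W).

Lemma countable_sigma_below w :
  countable [set d : C | sigma_product W d /\ forall i, d i -> lt i w \/ i = w].
Proof.
apply: (@inj_countable _ _ (fun d : C => [set i | d i]) _
  [set B | B `<=` [set v | lt v w \/ v = w] /\ finite_set B]).
- move=> d d' _ _ dd'; apply: functional_extensionality_dep => i.
  have /= di := congr1 (fun B : set W => B i) dd'.
  by apply/idP/idP => h; [rewrite di in h|rewrite -di in h].
- by move=> _ [d [Xd dw] <-]; split => // i /dw.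
- by apply: countable_finite_subset; exact: countable_initial_segment.
Qed.

Lemma sigma_product_range : exists g : W * nat -> C, sigma_product W `<=` range g.
Proof.
have enum (w : W) := countable_range_nat ((fun _ => false) : C) (countable_sigma_below w).
exists (fun v => projT1 (cid (enum v.1)) v.2) => d Xd.
have [w dw] := finite_set_bounded W_omega1 w0 Xd.
have [n _ <-] := projT2 (cid (enum w)) d (conj Xd (fun i di => dw i di)).
by exists (w, n).
Qed.
End SigmaEnumeration.

Section Construction.
Variables (W : Type) (A D : set (cantor_cube W)).
Local Notation C := (cantor_cube W).
Local Notation V := {classic W}.
Local Notation X := (sigma_product W).
Hypothesis AX : A `<=` X.
Hypothesis DA : D `<=` closure_in X A.
Hypothesis D_discrete : discrete_in X D.

Lemma DX : D `<=` X.
Proof. by move=> d /DA []. Qed.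

Definition isolated_in (B : set C) (d : C) :=
  B d /\ exists U : set C, [/\ open U, U d & forall a, B a -> U a -> a = d].

Definition window (d : C) : seq V :=
  if pselect (exists F : seq V, forall y, agree F d y -> X y -> D y -> y = d) is left h
  then projT1 (cid h) else [::].

Lemma windowP d : D d -> forall y, agree (window d) d y -> X y -> D y -> y = d.
Proof.
move=> Dd; rewrite /window; case: pselect => [h|]; first by case: (cid h).
case; have [U [oU UXD]] := D_discrete Dd.
have Ud : U d by have : [set d] d by []; rewrite -UXD => -[[]].
have [F FU] := nbhs_agree (open_nbhs_nbhs (conj oU Ud)).
exists F => y dy Xy Dy.
have : (U `&` X `&` D) y by split; [split; [exact: FU|]|].
by rewrite UXD.
Qed.

Lemma exists_approximant d : D d -> ~ isolated_in A d -> forall F : seq V,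
  exists a, [/\ A a, a <> d & agree F d a].
Proof.
move=> Dd dniso F; apply: contrapT => noa.
have Fd a : A a -> agree F d a -> a = d.
  by move=> Aa da; apply: contrapT => ad; apply: noa; exists a.
have [dA _] := DA Dd.
have [a [Aa da]] := dA _ (agree_nbhs d F).
apply: dniso; split; first by rewrite -(Fd a Aa da).
by exists [set y | agree F d y]; split => //; exact: open_agree.
Qed.

Definition approximant (d : C) (F : seq V) : C :=
  if pselect (exists a, [/\ A a, a <> d & agree F d a]) is left h then projT1 (cid h) else d.

Lemma approximantP d F : D d -> ~ isolated_in A d ->
  [/\ A (approximant d F), approximant d F <> d & agree F d (approximant d F)].
Proof.
move=> Dd dniso; rewrite /approximant; case: pselect => [h|]; first by case: (cid h).
by case; exact: exists_approximant.
Qed.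

(* Freezing the support of d and of every earlier approximant makes the tails beyond d
   pairwise disjoint, hence the approximants converge to d. *)
Fixpoint frozen (d : C) (k : nat) : seq V :=
  if k is k'.+1 then frozen d k' ++ supp (approximant d (frozen d k'))
  else window d ++ supp d.

Definition approx (d : C) (k : nat) : C :=
  if pselect (isolated_in A d) then d else approximant d (frozen d k).

Lemma frozen_mono d j k : (j <= k)%N -> {subset frozen d j <= frozen d k}.
Proof.
move=> /subnK <-; elim: (k - j)%N => [|m IH] i ij //.
by rewrite addSn /= mem_cat IH.
Qed.

Lemma approx_isoE d k : isolated_in A d -> approx d k = d.
Proof. by rewrite /approx; case: pselect. Qed.

Section NonIsolated.
Variable d : C.
Hypotheses (Dd : D d) (dniso : ~ isolated_in A d).

Lemma approx_nisoE k : approx d k = approximant d (frozen d k).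
Proof. by rewrite /approx; case: pselect. Qed.

Lemma approx_niso_A k : A (approx d k).
Proof. by rewrite approx_nisoE; case: (approximantP (frozen d k) Dd dniso). Qed.

Lemma approx_niso_neq k : approx d k <> d.
Proof. by rewrite approx_nisoE; case: (approximantP (frozen d k) Dd dniso). Qed.

Lemma approx_niso_frozen k : agree (frozen d k) d (approx d k).
Proof. by rewrite approx_nisoE; case: (approximantP (frozen d k) Dd dniso). Qed.

Lemma approx_niso_window k : agree (window d) d (approx d k).
Proof.
by move=> i iw; apply: approx_niso_frozen; apply: (@frozen_mono d 0) => //; rewrite mem_cat iw.
Qed.

Lemma subsupp_approx_niso k : subsupp d (approx d k).
Proof.
move=> i di; rewrite approx_niso_frozen //; apply: (@frozen_mono d 0) => //.
by rewrite /= mem_cat -suppP ?di ?orbT //; exact: DX.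
Qed.

Lemma approx_niso_new k : exists i, approx d k i /\ ~~ d i.
Proof.
exact: ssubsupp_new (conj (subsupp_approx_niso k) (nesym (@approx_niso_neq k))).
Qed.

Lemma approx_niso_tails j k i : (j < k)%N -> approx d j i -> ~~ d i -> approx d k i = false.
Proof.
move=> jk aji ndi; rewrite approx_niso_frozen; first exact/negbTE.
apply: (@frozen_mono d j.+1) => //.
by rewrite /= mem_cat -approx_nisoE -suppP ?aji ?orbT //; exact: AX (approx_niso_A j).
Qed.

Lemma approx_niso_cvg_at i : exists N, forall k, (N <= k)%N -> approx d k i = d i.
Proof.
have [[j [aji ndi]]|never] := pselect (exists j, approx d j i /\ ~~ d i).
  by exists j.+1 => k jk; rewrite (approx_niso_tails jk aji ndi); apply/esym/negbTE.
exists 0%N => k _; apply/idP/idP => [aki|]; last exact: subsupp_approx_niso.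
by apply: contrapT => /negP ndi; apply: never; exists k.
Qed.
End NonIsolated.

Lemma subsupp_approx d k : D d -> subsupp d (approx d k).
Proof.
move=> Dd; have [diso|dniso] := pselect (isolated_in A d); first by rewrite approx_isoE.
exact: subsupp_approx_niso.
Qed.

Lemma approx_A d k : D d -> A (approx d k).
Proof.
move=> Dd; have [diso|dniso] := pselect (isolated_in A d).
  by rewrite approx_isoE //; case: diso.
exact: approx_niso_A.
Qed.

Lemma approx_cvg d (F : seq V) : D d ->
  exists N, forall k, (N <= k)%N -> agree F d (approx d k).
Proof.
move=> Dd; have [diso|dniso] := pselect (isolated_in A d).
  by exists 0%N => k _ i _; rewrite approx_isoE.
elim: F => [|i F [N1 HN1]]; first by exists 0%N => k _ j; rewrite in_nil.
have [Ni HNi] := approx_niso_cvg_at Dd dniso i.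
exists (maxn N1 Ni) => k; rewrite geq_max => /andP [N1k Nik] j.
by rewrite in_cons => /orP [/eqP ->|jF]; [exact: HNi|exact: HN1].
Qed.

Definition point (x : C * nat) : C := approx x.1 x.2.

Lemma point_X x : D x.1 -> X (point x).
Proof. by move=> Dx; apply: AX; exact: approx_A. Qed.

Definition coherent (p : set (C * nat)) :=
  forall x y, p x -> p y -> ssubsupp (point x) (point y) ->
  subsupp (point x) y.1 \/ isolated_in A x.1.

Definition condition (p : set (C * nat)) :=
  [/\ finite_set p, (forall x, p x -> D x.1) & coherent p].

Definition Cond := {p : set (C * nat) | condition p}.

Definition cle (q p : Cond) := sval p `<=` sval q.

Lemma Cond_eq (p q : Cond) : sval p = sval q -> p = q.
Proof. by case: p q => p hp [q hq] /= e; apply: eq_exist. Qed.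

Lemma cle_po : is_partial_order cle.
Proof.
split=> [p x //|p q r pq qr x /qr /pq //|p q pq qp].
by apply: Cond_eq; apply/seteqP; split; [exact: qp|exact: pq].
Qed.

Lemma Cond_inhabited : inhabited Cond.
Proof. by apply: inhabits (exist _ set0 _); split => // x y. Qed.

Lemma cond_finite (p : Cond) : finite_set (sval p).
Proof. by case: (svalP p). Qed.

Lemma cond_D (p : Cond) x : sval p x -> D x.1.
Proof. by case: (svalP p) => _ pD _; apply: pD. Qed.

Lemma cond_coherent (p : Cond) : coherent (sval p).
Proof. by case: (svalP p). Qed.

Definition coords (p : Cond) : seq V := undup (flatten
  [seq supp (point x) ++ supp x.1 | x <- enum_fset (fset_set (sval p))]).

Lemma coords_uniq p : uniq (coords p).
Proof. exact: undup_uniq. Qed.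

Lemma coordsP (p : Cond) x (i : V) : sval p x -> point x i \/ x.1 i -> i \in coords p.
Proof.
move=> px xi; rewrite mem_undup; apply/flattenP.
exists (supp (point x) ++ supp x.1).
  by apply/mapP; exists x; rewrite ?in_fset_set ?inE //; exact: cond_finite.
have Dx := cond_D px.
by rewrite mem_cat -!suppP; [apply/orP|exact: DX|exact: point_X].
Qed.

Definition trace (L : seq V) (x : C * nat) : seq bool * seq bool * nat :=
  (map (point x) L, map x.1 L, x.2).

Definition cond_type (p : Cond) : nat * {fset seq bool * seq bool * nat} :=
  (size (coords p), fset_set [set trace (coords p) x | x in sval p]).

Lemma cond_type_trace p q : cond_type p = cond_type q -> forall x', sval q x' ->
  exists2 y, sval p y & trace (coords p) y = trace (coords q) x'.
Proof.
move=> [_ pq] x' qx'.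
have [fp fq] := (finite_image (trace (coords p)) (cond_finite p),
                 finite_image (trace (coords q)) (cond_finite q)).
have : [set trace (coords q) x | x in sval q] (trace (coords q) x') by exists x'.
by rewrite -(fset_setK fq) -pq (fset_setK fp) => -[y py yx']; exists y.
Qed.

Lemma coherentU (p q : Cond) :
  aligned (coords p) (coords q) -> size (coords p) = size (coords q) ->
  (forall x', sval q x' -> exists2 y, sval p y & trace (coords p) y = trace (coords q) x') ->
  forall x x', sval p x -> sval q x' -> ssubsupp (point x) (point x') ->
  subsupp (point x) x'.1 \/ isolated_in A x.1.
Proof.
move=> al sz qp x x' px qx' xx'.
have [y py [yx'1 yx'2 _]] := qp x' qx'.
have xp i : point x i -> i \in coords p by move=> xi; exact: coordsP px (or_introl xi).
have xq i : point x i -> i \in coords q.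
  by move=> /xx'.1 x'i; exact: coordsP qx' (or_introl x'i).
have xy : ssubsupp (point x) (point y).
  apply: (aligned_map_ssubsupp al sz (coords_uniq p) xp _ yx'1 xx').
  by move=> i x'i; exact: coordsP qx' (or_introl x'i).
have [xy1|] := cond_coherent px py xy; last by right.
by left => i xi; rewrite -(aligned_map_eq al (xp i xi) (xq i xi) yx'2); exact: xy1.
Qed.

Lemma condition_union (p q : Cond) : aligned (coords p) (coords q) ->
  cond_type p = cond_type q -> condition (sval p `|` sval q).
Proof.
move=> al pq; have sz : size (coords p) = size (coords q) by case: pq.
split.
- by rewrite finite_setU; split; exact: cond_finite.
- by move=> x [px|qx]; [exact: cond_D px|exact: cond_D qx].
- move=> x y [px|qx] [py|qy].
  + exact: cond_coherent px py.
  + exact: coherentU al sz (cond_type_trace pq) _ _ px qy.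
  + exact: coherentU (aligned_sym al) (esym sz) (cond_type_trace (esym pq)) _ _ qx py.
  + exact: cond_coherent qx qy.
Qed.

Lemma cond_type_inj (p q : Cond) : cond_type p = cond_type q -> coords p = coords q -> p = q.
Proof.
suff sub p' q' : cond_type p' = cond_type q' -> coords p' = coords q' -> sval q' `<=` sval p'.
  by move=> pq cpq; apply: Cond_eq; apply/seteqP; split; [apply: sub|apply: sub].
move=> pq cpq x qx; have [y py] := cond_type_trace pq qx.
rewrite cpq => -[_ yx1 yx2].
have -> // : x = y.
have e1 : y.1 = x.1.
  apply: (eq_of_map_supp yx1) => i yi; last exact: coordsP qx (or_intror yi).
  by rewrite -cpq; exact: coordsP py (or_intror yi).
by case: x y e1 yx2 {qx py yx1} => [x1 x2] [y1 y2] /= -> ->.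
Qed.

Lemma Cond_ccc (w0 : W) : ccc cle.
Proof.
move=> S antiS; apply: contrapT => Sunc.
have [tau tau_unc] := uncountable_fiber cond_type Sunc.
set St := S `&` cond_type @^-1` [set tau].
have coords_unc : ~ countable (coords @` St).
  apply: contra_not tau_unc; apply: (@inj_countable _ _ coords) => // p q.
  by rewrite !inE => -[_ ptau] [_ qtau] /cond_type_inj; apply; rewrite ptau qtau.
have shape : shaped tau.1 (coords @` St).
  by move=> _ [p [_ ptau] <-]; split; [exact: coords_uniq|rewrite -ptau].
have [_ [_ [[p [Sp ptau] <-] [q [Sq qtau] <-] pq al]]] :=
  uncountable_aligned_pair (w0 : V) shape coords_unc.
have neq : p <> q by move=> e; apply: pq; rewrite e.
apply: (antiS p q Sp Sq neq).
have pqU := condition_union al (etrans ptau (esym qtau)).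
by exists (exist _ _ pqU); split => x hx; [left|right].
Qed.

Lemma coherent_add (p : Cond) d k : D d -> agree (coords p) d (approx d k) ->
  coherent (sval p `|` [set (d, k)]).
Proof.
move=> Dd dk x y [px|->] [py|->].
- exact: cond_coherent px py.
- move=> [xdk _]; left => a xa.
  by rewrite /= -(dk a (coordsP px (or_introl xa))); exact: xdk.
- move=> [dky _]; have [|dniso] := pselect (isolated_in A d); first by right.
  have [b [dkb ndb]] := approx_niso_new Dd dniso k.
  by move: (dkb); rewrite (dk b (coordsP py (or_introl (dky b dkb)))) (negbTE ndb).
- by case.
Qed.

Definition hits (d : C) (n : nat) : set Cond :=
  if pselect (D d) then [set p | exists2 k, (n <= k)%N & sval p (d, k)] else setT.

Lemma hits_dense d n : dense_set cle (hits d n).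
Proof.
rewrite /hits; case: pselect => Dd p; last by exists p.
have [N HN] := approx_cvg (coords p) Dd.
have dk := HN (maxn n N) (leq_maxr n N).
have cond : condition (sval p `|` [set (d, maxn n N)]).
  split; last exact: coherent_add.
  - by rewrite finite_setU; split; [exact: cond_finite|exact: finite_set1].
  - by move=> x [px|->]; [exact: cond_D px|].
exists (exist _ _ cond); last by move=> x px; left.
by exists (maxn n N); [exact: leq_maxl|right].
Qed.

Section Generic.
Variable G : set Cond.
Hypothesis G_filter : is_filter cle G.
Hypothesis G_hits : forall d n, D d -> G `&` hits d n !=set0.

Lemma G_coherent p q x y : G p -> G q -> sval p x -> sval q y ->
  ssubsupp (point x) (point y) -> subsupp (point x) y.1 \/ isolated_in A x.1.
Proof.
case: G_filter => _ _ G_dir Gp Gq px qy.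
have [r [_ rp rq]] := G_dir p q Gp Gq.
exact: cond_coherent (rp x px) (rq y qy).
Qed.

Definition chosen : set C := [set e | exists p x, [/\ G p, sval p x & e = point x]].

Lemma chosen_A : chosen `<=` A.
Proof. by move=> _ [p [x [Gp px ->]]]; apply: approx_A; exact: cond_D px. Qed.

(* A chosen point strictly above [point x] comes from a centre d' with d <= point x <= d',
   by coherence; agreeing with d on its window forces d' = d, hence point x = d. *)
Lemma chosen_window p x y : G p -> sval p x -> ~ isolated_in A x.1 ->
  agree (supp (point x) ++ window x.1) (point x) y -> chosen y -> y = point x.
Proof.
move=> Gp px xniso /agree_cat [xy xwy] [q [x' [Gq qx' yx']]]; subst y.
apply: contrapT => neq.
have Dx := cond_D px; have Dx' := cond_D qx'.
have xx' : subsupp (point x) (point x').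
  by move=> a xa; rewrite xy // -suppP //; exact: point_X.
have [xx'1|] := G_coherent Gp Gq px qx' (conj xx' (nesym neq)); last by [].
have x1x'1 : subsupp x.1 x'.1 by move=> a /(subsupp_approx x.2 Dx); exact: xx'1.
have wx' : agree (window x.1) x.1 x'.1.
  move=> i iw; case x1i: (x.1 i); first exact: x1x'1.
  apply/negbTE/negP => /(subsupp_approx x'.2 Dx') x'i.
  by move: (xwy i iw); rewrite /point x'i (approx_niso_window Dx xniso x.2 iw) x1i.
have x'1 := windowP Dx wx' (DX Dx') Dx'.
apply: (approx_niso_neq Dx xniso (k:=x.2)); apply: subsupp_anti.
  by move=> i xi; rewrite -x'1; exact: xx'1.
exact: subsupp_approx_niso.
Qed.

Lemma chosen_discrete : discrete_in X chosen.
Proof.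
move=> _ [p [x [Gp px ->]]].
have Dx := cond_D px.
have Xx : X (point x) by exact: point_X.
have [xiso|xniso] := pselect (isolated_in A x.1).
  have xE : point x = x.1 by rewrite /point approx_isoE.
  case: (xiso) => _ [U [oU Ux Uiso]].
  exists U; split => //; apply/seteqP; split => [y [[Uy _] /chosen_A Ay]|y ->].
    by rewrite xE; exact: Uiso.
  by rewrite xE in Xx *; split; [split|exists p, x; rewrite xE].
exists [set y | agree (supp (point x) ++ window x.1) (point x) y].
split; first exact: open_agree.
apply/seteqP; split => [y [[xy _] cy]|y ->]; first exact: chosen_window Gp px xniso xy cy.
by split; [split|exists p, x].
Qed.

Lemma closure_chosen : D `<=` closure_in X chosen.
Proof.
move=> d Dd; split; last exact: DX.
move=> B /nbhs_agree [F FB].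
have [N HN] := approx_cvg F Dd.
have [p [Gp]] := G_hits N Dd.
rewrite /hits; case: pselect => // _ [k Nk pk].
by exists (approx d k); split; [exists p, (d, k)|apply: FB; exact: HN].
Qed.
End Generic.

End Construction.

Theorem theorem6p9 (W : Type) (lt : W -> W -> Prop) :
  is_omega1 lt -> MA_aleph1 -> DDG_subspace (sigma_product W).
Proof.
move=> W_omega1 MA A AX D DA D_discrete.
have [w0] := omega1_inhabited W_omega1.
have [g Xg] := sigma_product_range w0 W_omega1.
have [G [G_filter G_meets]] := MA_aleph1_lexi W_omega1 (0, 0)%N MA (cle_po A D)
  (Cond_inhabited A D) (Cond_ccc AX DA w0)
  (fun v => hits_dense AX DA (g (v.1, v.2.1)) v.2.2).
exists (chosen G); split.
- exact: (@chosen_A _ _ _ DA G).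
- exact: (@chosen_discrete _ _ _ AX DA D_discrete G G_filter).
- apply: (closure_chosen AX DA) => d n Dd.
  have [[w m] _ gd] := Xg d (DX DA Dd).
  by have := G_meets (w, (m, n)); rewrite /= gd.
Qed.
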